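(* Let $C=(X,\xi)$ be a finite $T$-coalgebra. For every $x\in X$ there exists a closed and guarded expression $\phi\in\mathcal{E}_0$ such that $x\in[\![\phi]\!]_C$.
   Context: Standing assumptions: $T:\mathbf{Set}\to\mathbf{Set}$ is a functor; $\mathcal{L}$ is a set of modalities with arities ($L/n$), each $L/n$ assigned an $n$-ary monotone singleton-preserving predicate lifting $[\![L]\!]$ for $T$ such that $\Lambda=\{[\![L]\!]\mid L\in\mathcal{L}\}$ is strongly expressive. (An $n$-ary predicate lifting is a family $\lambda_X:(\mathcal{P}X)^n\to\mathcal{P}(TX)$ with $\lambda_X(f^{-1}[A_1],\dots,f^{-1}[A_n])=(Tf)^{-1}[\lambda_Y(A_1,\dots,A_n)]$ for $f:X\to Y$; monotone if monotone in each argument; singleton-preserving if $|\lambda_X(\{x_1\},\dots,\{x_n\})|=1$ for all $x_i\in X$; $\Lambda$ strongly expressive if for every set $X$ and $t\in TX$ there are $\lambda/n\in\Lambda$, $x_i\in X$ with $\{t\}=\lambda_X(\{x_1\},\dots,\{x_n\})$.) Fix a set $V$ of variables. Expressions $\mathcal{E}$: $\phi::=z\mid\nu z.\,\phi\mid L(\phi_1,\dots,\phi_n)$. Closed: every variable occurrence bound by a $\nu$. Guarded: every variable occurrence is separated from its binding $\nu$ by at least one modality. $\mathcal{E}_0$ is the set of closed guarded expressions. Semantics in a coalgebra $C=(X,\xi)$ under valuation $\kappa:V\to\mathcal{P}X$: $[\![z]\!]^\kappa=\kappa(z)$; $[\![L(\phi_1,\dots,\phi_n)]\!]^\kappa=\xi^{-1}[[\![L]\!]_X([\![\phi_1]\!]^\kappa,\dots,[\![\phi_n]\!]^\kappa)]$;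 $[\![\nu z.\phi]\!]^\kappa=$ greatest fixed point of $Y\mapsto[\![\phi]\!]^{\kappa[z\mapsto Y]}$; for closed $\phi$ write $[\![\phi]\!]_C$. *)

From Stdlib Require Import Fin FinFun.



Record SetFunctor := {
  Tobj :> Type -> Type;
  fmap : forall (X Y : Type), (X -> Y) -> Tobj X -> Tobj Y;
  fmap_id : forall (X : Type) (t : Tobj X), fmap X X (fun x : X => x) t = t;
  fmap_comp : forall (X Y Z : Type) (f : X -> Y) (g : Y -> Z) (t : Tobj X),
      fmap X Z (fun x => g (f x)) t = fmap Y Z g (fmap X Y f t)
}.

Section Logic.
Variable T : SetFunctor.
Variable Mod : Type.
Variable ar : Mod -> nat.
(** [lift L X] is [[L]]_X : (P X)^n -> P (T X); subsets are predicates. *)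
Variable lift : forall (L : Mod) (X : Type),
    (Fin.t (ar L) -> X -> Prop) -> T X -> Prop.

Definition natural_lifting : Prop :=
  forall (L : Mod) (X Y : Type) (f : X -> Y) (A : Fin.t (ar L) -> Y -> Prop) (t : T X),
    lift L X (fun i x => A i (f x)) t <-> lift L Y A (fmap T X Y f t).

Definition monotone_lifting : Prop :=
  forall (L : Mod) (X : Type) (A B : Fin.t (ar L) -> X -> Prop) (t : T X),
    (forall i x, A i x -> B i x) -> lift L X A t -> lift L X B t.

Definition singleton_preserving : Prop :=
  forall (L : Mod) (X : Type) (xs : Fin.t (ar L) -> X),
    exists t : T X, forall t', lift L X (fun i y => y = xs i) t' <-> t' = t.

Definition strongly_expressive : Prop :=
  forall (X : Type) (t : T X),
    exists (L : Mod) (xs : Fin.t (ar L) -> X),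
      forall t', lift L X (fun i y => y = xs i) t' <-> t' = t.

Variable V : Type.

Inductive expr : Type :=
| evar : V -> expr
| enu : V -> expr -> expr
| emod : forall L : Mod, (Fin.t (ar L) -> expr) -> expr.

Fixpoint free (z : V) (phi : expr) : Prop :=
  match phi with
  | evar w => w = z
  | enu w psi => w <> z /\ free z psi
  | emod L args => exists i, free z (args i)
  end.

Definition closed (phi : expr) : Prop := forall z, ~ free z phi.

Fixpoint unguarded_free (z : V) (phi : expr) : Prop :=
  match phi with
  | evar w => w = z
  | enu w psi => w <> z /\ unguarded_free z psi
  | emod _ _ => False
  end.

Fixpoint guarded (phi : expr) : Prop :=
  match phi with
  | evar _ => True
  | enu z psi => ~ unguarded_free z psi /\ guarded psi
  | emod L args => forall i, guarded (args i)
  end.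

Definition closed_guarded (phi : expr) : Prop := closed phi /\ guarded phi.

Variable X : Type.
Variable xi : X -> T X.

Definition upd (kappa : V -> X -> Prop) (z : V) (Y : X -> Prop) : V -> X -> Prop :=
  fun w x => (w = z /\ Y x) \/ (w <> z /\ kappa w x).

(** greatest fixed point = union of all post-fixed points (Knaster-Tarski) *)
Definition gfp (F : (X -> Prop) -> (X -> Prop)) : X -> Prop :=
  fun x => exists Y : X -> Prop, (forall y, Y y -> F Y y) /\ Y x.

Fixpoint sem (phi : expr) (kappa : V -> X -> Prop) : X -> Prop :=
  match phi with
  | evar z => kappa z
  | enu z psi => gfp (fun Y => sem psi (upd kappa z Y))
  | emod L args => fun x => lift L X (fun i => sem (args i) kappa) (xi x)
  end.

(** [[phi]]_C for closed phi (valuation irrelevant; we use the empty one) *)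
Definition sem_closed (phi : expr) : X -> Prop := sem phi (fun _ _ => False).

End Logic.

Arguments fmap {s X Y} _ _.
Arguments expr {Mod} ar V.
Arguments evar {Mod ar V} _.
Arguments enu {Mod ar V} _ _.
Arguments emod {Mod ar V} _ _.

(* Strong expressivity describes each state y by a modality L_y and successors
   y_1, ..., y_n with {ξ(y)} = [[L_y]]({y_1}, ..., {y_n}).  Unfold x along these
   descriptions into ν z_x. L_x(...), closing a branch with the variable z_y as soon
   as a state y recurs on it; as X is finite the branches are shorter than |X|, and
   every variable sits under a modality.  Valuing each z_y by {y} makes {y} a
   post-fixed point, so monotonicity of the liftings puts x in the denotation. *)

From Stdlib Require Import Fin FinFun List ClassicalEpsilon Lia.

Lemma strongly_expressive_description
  (T : SetFunctor) (Mod : Type) (ar : Mod -> nat)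
  (lift : forall (L : Mod) (X : Type), (Fin.t (ar L) -> X -> Prop) -> T X -> Prop)
  (X : Type) (xi : X -> T X) :
  strongly_expressive T Mod ar lift ->
  exists (Lf : X -> Mod) (xsf : forall x, Fin.t (ar (Lf x)) -> X),
    forall x, lift (Lf x) X (fun i y => y = xsf x i) (xi x).
Proof.
  intros Hexpr.
  pose (desc x := constructive_indefinite_description _ (Hexpr X (xi x))).
  pose (succ x := constructive_indefinite_description _ (proj2_sig (desc x))).
  exists (fun x => proj1_sig (desc x)), (fun x => proj1_sig (succ x)).
  intros x. apply (proj2_sig (succ x)). reflexivity.
Qed.

Section Unfolding.

Variables (T : SetFunctor) (Mod : Type) (ar : Mod -> nat).
Variable lift : forall (L : Mod) (X : Type), (Fin.t (ar L) -> X -> Prop) -> T X -> Prop.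
Hypothesis Hmon : monotone_lifting T Mod ar lift.
Variables (V : Type) (vars : nat -> V).
Hypothesis Hvars : Injective vars.
Variables (X : Type) (xi : X -> T X).
Variables (Lf : X -> Mod) (xsf : forall x, Fin.t (ar (Lf x)) -> X).
Hypothesis Hdesc : forall x, lift (Lf x) X (fun i y => y = xsf x i) (xi x).

Local Notation sem := (sem T Mod ar lift V X xi).

(* The environment is the stack of states bound on the current branch; the state
   pushed onto a stack of length k is bound to [vars k]. *)
Fixpoint var_of (x : X) (vs : list X) : option nat :=
  match vs with
  | nil => None
  | y :: vs' =>
      if excluded_middle_informative (x = y) then Some (length vs') else var_of x vs'
  end.

Lemma var_of_lt x vs k : var_of x vs = Some k -> k < length vs.
Proof.
  induction vs as [|y vs IH]; simpl; [discriminate|].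
  destruct excluded_middle_informative.
  - intros [= <-]. lia.
  - intros Hk. specialize (IH Hk). lia.
Qed.

Lemma var_of_None x vs : var_of x vs = None -> ~ In x vs.
Proof.
  induction vs as [|y vs IH]; simpl; [tauto|].
  destruct excluded_middle_informative as [|Hne]; [discriminate|].
  intros Hx [<- | Hin]; [exact (Hne eq_refl) | exact (IH Hx Hin)].
Qed.

(* The fuel-exhausted branch [n = 0] is junk: it is unreachable from a sound start
   (see [unfold_sem]), and is merely chosen closed and guarded. *)
Fixpoint unfold (n : nat) (vs : list X) (x : X) : expr ar V :=
  match var_of x vs with
  | Some k => evar (vars k)
  | None =>
      match n with
      | 0 => enu (vars 0) (emod (Lf x) (fun _ => evar (vars 0)))
      | S n' => enu (vars (length vs))
                  (emod (Lf x) (fun i => unfold n' (x :: vs) (xsf x i)))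
      end
  end.

Lemma unfold_guarded n vs x : guarded Mod ar V (unfold n vs x).
Proof.
  revert vs x; induction n as [|n IH]; intros vs x; simpl;
    destruct (var_of x vs); simpl; auto.
Qed.

Lemma unfold_free n vs x z :
  free Mod ar V z (unfold n vs x) -> exists k, k < length vs /\ z = vars k.
Proof.
  revert vs x; induction n as [|n IH]; intros vs x; simpl;
    destruct (var_of x vs) as [k|] eqn:Hx; simpl.
  - intros <-. eauto using var_of_lt.
  - intros [Hz [_ <-]]. contradiction.
  - intros <-. eauto using var_of_lt.
  - intros [Hz [i Hfree]].
    destruct (IH _ _ Hfree) as [k [Hk ->]]; simpl in Hk.
    assert (k <> length vs) by (intros ->; contradiction).
    exists k; split; [lia | reflexivity].
Qed.

Lemma unfold_closed n x : closed Mod ar V (unfold n nil x).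
Proof.
  intros z Hfree. destruct (unfold_free _ _ _ _ Hfree) as [k [Hk _]].
  simpl in Hk. lia.
Qed.

Definition env_sound (kappa : V -> X -> Prop) (vs : list X) : Prop :=
  forall y k, var_of y vs = Some k -> kappa (vars k) y.

Lemma env_sound_push kappa vs x :
  env_sound kappa vs ->
  env_sound (upd V X kappa (vars (length vs)) (fun y => y = x)) (x :: vs).
Proof.
  intros Hsound y k. simpl. unfold upd.
  destruct excluded_middle_informative as [-> | _].
  - intros [= <-]. left. auto.
  - intros Hy. right. split; [|exact (Hsound _ _ Hy)].
    intros Hk. apply Hvars in Hk. apply var_of_lt in Hy. lia.
Qed.

Lemma sem_emod_desc x (args : Fin.t (ar (Lf x)) -> expr ar V) kappa :
  (forall i, sem (args i) kappa (xsf x i)) -> sem (emod (Lf x) args) kappa x.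
Proof.
  intros Hargs. apply (Hmon _ _ (fun i y => y = xsf x i)); [|apply Hdesc].
  intros i y ->. apply Hargs.
Qed.

Lemma fresh_length_lt (l vs : list X) (x : X) :
  Full l -> NoDup vs -> ~ In x vs -> length vs < length l.
Proof.
  intros Hl Hnd Hx.
  apply (@NoDup_incl_length X (x :: vs) l); [constructor; auto | intros y _; apply Hl].
Qed.

Lemma unfold_sem (l : list X) (Hl : Full l) n vs x kappa :
  env_sound kappa vs -> NoDup vs -> length l <= n + length vs ->
  sem (unfold n vs x) kappa x.
Proof.
  revert vs x kappa; induction n as [|n IH]; intros vs x kappa Hsound Hnd Hfuel;
    simpl; destruct (var_of x vs) as [k|] eqn:Hx; simpl.
  - exact (Hsound _ _ Hx).
  - pose proof (fresh_length_lt l vs x Hl Hnd (var_of_None _ _ Hx)). lia.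
  - exact (Hsound _ _ Hx).
  - exists (fun y => y = x). split; [|reflexivity].
    intros y ->. apply sem_emod_desc. intros i. apply IH.
    + apply env_sound_push, Hsound.
    + constructor; [exact (var_of_None _ _ Hx) | exact Hnd].
    + simpl. lia.
Qed.

End Unfolding.

Theorem mainTheorem12
  (T : SetFunctor) (Mod : Type) (ar : Mod -> nat)
  (lift : forall (L : Mod) (X : Type), (Fin.t (ar L) -> X -> Prop) -> T X -> Prop)
  (Hnat : natural_lifting T Mod ar lift)
  (Hmon : monotone_lifting T Mod ar lift)
  (Hsing : singleton_preserving T Mod ar lift)
  (Hexpr : strongly_expressive T Mod ar lift)
  (V : Type) (vars : nat -> V) (Hvars : Injective vars)
  (X : Type) (xi : X -> T X) (HX : Finite X) :
  forall x : X, exists phi : expr ar V,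
    closed_guarded Mod ar V phi /\ sem_closed T Mod ar lift V X xi phi x.
Proof.
  intros x. destruct HX as [l Hl].
  destruct (strongly_expressive_description T Mod ar lift X xi Hexpr)
    as [Lf [xsf Hdesc]].
  exists (unfold Mod ar V vars X Lf xsf (length l) nil x). split; [split|].
  - apply unfold_closed.
  - apply unfold_guarded.
  - apply (unfold_sem T Mod ar lift Hmon V vars Hvars X xi Lf xsf Hdesc l Hl).
    + intros y k [=].
    + constructor.
    + simpl. lia.
Qed.
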